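(* Let $S$ be a semiregular pseudocompact semitopological semigroup which is an orthogonal sum $S=\sum_{i\in\mathscr I}B^0_{\lambda_i}(S_i)$ of topological Brandt $\lambda_i^0$-extensions of semitopological monoids $S_i$ with zeros. Then for every open neighbourhood $U(0)$ of the zero $0$ of $S$ the set of triples $(i,\alpha_i,\beta_i)$ with $i\in\mathscr I$, $\alpha_i,\beta_i\in\lambda_i$ and $(S_i)_{\alpha_i,\beta_i}\not\subseteq U(0)$ is finite.
   Context: All spaces are Hausdorff; a semitopological semigroup is a Hausdorff space with separately continuous associative operation. A space is semiregular if it has a base of regular open sets ($A$ is regular open if $\operatorname{int}\operatorname{cl}A=A$); pseudocompact means every locally finite family of non-empty open sets is finite. For a semigroup $T$ with zero $0_T$ and a cardinal $\lambda\ge1$, $B^0_\lambda(T)=(\lambda\times (T\setminus\{0_T\})\times\lambda)\cup\{0\}$ with $(\alpha,a,\beta)(\gamma,b,\delta)=(\alpha,ab,\delta)$ if $\beta=\gamma$ and $ab\ne0_T$, and $0$ otherwise, $0$ a zero. For $A\subseteq T$, $A_{\alpha,\beta}=\{(\alpha,s,\beta):s\in A\setminus\{0_T\}\}\cup\{0\}$ if $0_T\in A$ and $\{(\alpha,s,\beta):s\in A\}$ otherwise. A topological Brandt $\lambda^0$-extension of a semitopological monoid $T$ with zero is $B^0_\lambda(T)$ with a topology making it a semitopological semigroup such that for some $\alpha\in\lambda$ the map $s\mapsto(\alpha,s,\alpha)$ ($0_T\mapsto0$) is a homeomorphism $T\to T_{\alpha,\alpha}$. The orthogonal sum of semigroups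 $T_\iota$ with zeros is $\{0\}\cup\bigcup_\iota(T_\iota\setminus\{0_\iota\})$ with products computed in $T_\iota$ when both factors lie in the same $T_\iota$ and the product is non-zero, and $0$ otherwise. *)

From Stdlib Require Import List Classical ClassicalEpsilon.
Set Implicit Arguments.

Definition subset {X : Type} (A B : X -> Prop) : Prop := forall x, A x -> B x.

Definition finite_set {X : Type} (P : X -> Prop) : Prop :=
  exists l : list X, forall x, P x -> In x l.

Section Topology.
Variable X : Type.
Variable op : (X -> Prop) -> Prop.  (* the family of open sets *)

Definition is_topology : Prop :=
  op (fun _ => True) /\ op (fun _ => False) /\
  (forall F : (X -> Prop) -> Prop, (forall U, F U -> op U) ->
      op (fun x => exists U, F U /\ U x)) /\
  (forall U V, op U -> op V -> op (fun x => U x /\ V x)).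

Definition hausdorff : Prop :=
  forall x y, x <> y -> exists U V, op U /\ op V /\ U x /\ V y /\
     (forall z, U z -> V z -> False).

Definition closure (A : X -> Prop) : X -> Prop :=
  fun x => forall U, op U -> U x -> exists y, U y /\ A y.

Definition interior (A : X -> Prop) : X -> Prop :=
  fun x => exists U, op U /\ U x /\ subset U A.

Definition regular_open (A : X -> Prop) : Prop :=
  forall x, interior (closure A) x <-> A x.

Definition semiregular : Prop :=
  forall U x, op U -> U x -> exists V, regular_open V /\ V x /\ subset V U.

Definition locally_finite (F : (X -> Prop) -> Prop) : Prop :=
  forall x, exists V, op V /\ V x /\
    finite_set (fun U => F U /\ exists y, V y /\ U y).

Definition pseudocompact : Prop :=
  forall F : (X -> Prop) -> Prop,
    (forall U, F U -> op U /\ exists x, U x) ->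
    locally_finite F -> finite_set F.
End Topology.

Definition continuous {X Y : Type} (opX : (X -> Prop) -> Prop)
  (opY : (Y -> Prop) -> Prop) (f : X -> Y) : Prop :=
  forall V, opY V -> opX (fun x => V (f x)).

Definition semitopological_semigroup {X : Type} (op : (X -> Prop) -> Prop)
  (mul : X -> X -> X) : Prop :=
  is_topology op /\ hausdorff op /\
  (forall a b c, mul a (mul b c) = mul (mul a b) c) /\
  (forall a, continuous op op (fun x => mul a x)) /\
  (forall a, continuous op op (fun x => mul x a)).

Record MonZ := {
  mz_car :> Type;
  mz_mul : mz_car -> mz_car -> mz_car;
  mz_one : mz_car;
  mz_zero : mz_car;
  mz_open : (mz_car -> Prop) -> Prop
}.

Definition semitopological_monoid_with_zero (T : MonZ) : Prop :=
  semitopological_semigroup (mz_open T) (mz_mul T) /\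
  (forall x, mz_mul T (mz_one T) x = x /\ mz_mul T x (mz_one T) = x) /\
  (forall x, mz_mul T (mz_zero T) x = mz_zero T /\ mz_mul T x (mz_zero T) = mz_zero T).

Section OrthSum.
Variable I : Type.
Variable T : I -> MonZ.
Variable L : I -> Type.

Definition nz (i : I) : Type := { s : T i | s <> mz_zero (T i) }.

(** Non-zero elements: (i, alpha, s, beta) with s <> 0_{T_i};
    the element [None] is the common zero 0. *)
Definition elt : Type := { i : I & (L i * nz i * L i)%type }.
Definition OS : Type := option elt.

Definition zeroOS : OS := None.

Definition bmul (i : I) (x y : L i * nz i * L i) : OS :=
  match x, y with
  | (a, s, b), (c, t, d) =>
    if excluded_middle_informative (b = c) then
      match excluded_middle_informative
              (mz_mul (T i) (proj1_sig s) (proj1_sig t) = mz_zero (T i)) with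
      | left _ => None
      | right h => Some (existT _ i (a, exist (fun z => z <> mz_zero (T i)) _ h, d))
      end
    else None
  end.

Definition osmul (x y : OS) : OS :=
  match x, y with
  | Some (existT _ i u), Some (existT _ j v) =>
    match excluded_middle_informative (j = i) with
    | left e => @bmul i u (eq_rect j (fun k => (L k * nz k * L k)%type) v i e)
    | right _ => None
    end
  | _, _ => None
  end.

Definition diag_emb (i : I) (alpha : L i) (s : T i) : OS :=
  match excluded_middle_informative (s = mz_zero (T i)) with
  | left _ => None
  | right h => Some (existT _ i (alpha, exist (fun z => z <> mz_zero (T i)) s h, alpha))
  end.

(** (T_i)_{alpha,beta} = {(alpha,s,beta) : s in T_i \ {0}} ∪ {0} *)
Definition block (i : I) (alpha beta : L i) : OS -> Prop :=
  fun x => x = None \/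
    exists s : nz i, x = Some (existT _ i (alpha, s, beta)).

(** With the topology [op] on S, the sub-semigroup B^0_{lambda_i}(T_i) (with the
    subspace topology) is a topological Brandt lambda_i^0-extension of T_i:
    for some alpha, s |-> (alpha,s,alpha) is a homeomorphism of T_i onto
    (T_i)_{alpha,alpha} (with the subspace topology). *)
Definition topological_Brandt_component (op : (OS -> Prop) -> Prop) (i : I) : Prop :=
  exists alpha : L i,
    continuous (mz_open (T i)) op (diag_emb alpha) /\
    (forall V, mz_open (T i) V ->
       exists W, op W /\
         forall s, (W (diag_emb alpha s) <-> V s)).
End OrthSum.

From Stdlib Require Import List Classical ClassicalEpsilon FunctionalExtensionality
  PropExtensionality ProofIrrelevance.

(** The non-zero elements of the orthogonal sum split into the
    "cells" (T_i \ {0})_{alpha,beta}, one for each triple t = (i, alpha, beta),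
    and (T_i)_{alpha,beta} is its cell together with 0.  The argument has two
    independent halves.

    Topology: in a semiregular pseudocompact space, let the points other than
    p be covered by pairwise disjoint open sets N t.  Take a regular open
    V ⊆ U around p and let C be the exterior of V.  If N t ⊄ U then N t meets
    C (an open set inside cl V lies in int cl V = V).  The non-empty open sets
    N t ∩ C form a locally finite family (V avoids all of them, and N t0 meets
    only N t0), hence a finite one, and distinct t give distinct members.

    Algebra: every cell is open, since with the idempotents e_a = (a,1,a) of
    the sum, the cell of (i, a, b) is { y | e_a (y e_b) <> 0 }, the preimage of
    the open set S \ {0} under two separately continuous translations.

    The theorem follows by applying the topological half to the cells. *)

Lemma op_ext {X : Type} (op : (X -> Prop) -> Prop) (A B : X -> Prop) :
  (forall x, A x <-> B x) -> op A -> op B.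
Proof.
  intros HAB HA.
  replace B with A; [exact HA|].
  apply functional_extensionality; intro x.
  apply propositional_extensionality, HAB.
Qed.

Lemma finite_set_mono {X : Type} (P Q : X -> Prop) :
  (forall x, P x -> Q x) -> finite_set Q -> finite_set P.
Proof. intros HPQ [l Hl]. exists l. auto. Qed.

Lemma finite_of_finite_image {A B : Type} (f : A -> B) (P : A -> Prop) :
  (forall t t', P t -> P t' -> f t = f t' -> t = t') ->
  finite_set (fun y => exists t, P t /\ y = f t) -> finite_set P.
Proof.
  intros Hinj [l Hl].
  set (preimage := fun y : B =>
    match excluded_middle_informative (exists t, P t /\ y = f t) with
    | left h => proj1_sig (constructive_indefinite_description _ h) :: nil
    | right _ => nil
    end).
  exists (flat_map preimage l).
  intros t Pt. apply in_flat_map. exists (f t). split; [apply Hl; eauto|].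
  unfold preimage.
  destruct (excluded_middle_informative _) as [h|n]; [|exfalso; eauto].
  destruct (constructive_indefinite_description _ h) as [t' [Pt' Ht']]; simpl.
  left. symmetry. exact (Hinj t t' Pt Pt' Ht').
Qed.

Section GeneralTopology.
Variables (X : Type) (op : (X -> Prop) -> Prop).
Hypothesis Htop : is_topology op.

Lemma open_of_locally_open (P : X -> Prop) :
  (forall x, P x -> exists U, op U /\ U x /\ subset U P) -> op P.
Proof.
  intros Hloc. destruct Htop as [_ [_ [Hunion _]]].
  apply (op_ext _ (fun x => exists U, (op U /\ subset U P) /\ U x)).
  - intro x; split.
    + intros [U [[_ HU] Ux]]. auto.
    + intro Px. destruct (Hloc x Px) as [U [oU [Ux HU]]]. eauto.
  - apply Hunion. intros U [oU _]. exact oU.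
Qed.

Lemma regular_open_open (V : X -> Prop) : regular_open op V -> op V.
Proof.
  intros rV. apply open_of_locally_open. intros x Vx.
  destruct (proj2 (rV x) Vx) as [W [oW [Wx HW]]].
  exists W. repeat split; auto.
  intros y Wy. apply rV. exists W. auto.
Qed.

Lemma exterior_open (A : X -> Prop) : op (fun x => ~ closure op A x).
Proof.
  apply open_of_locally_open. intros x Hx.
  apply not_all_ex_not in Hx as [W Hx].
  apply imply_to_and in Hx as [oW Hx]. apply imply_to_and in Hx as [Wx Hx].
  exists W. repeat split; auto.
  intros y Wy Hy. destruct (Hy W oW Wy) as [z [Wz Az]]. eauto.
Qed.

Lemma subset_closure (A : X -> Prop) : subset A (closure op A).
Proof. intros x Ax U oU Ux. eauto. Qed.

Lemma open_subset_closure_regular (V N : X -> Prop) :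
  regular_open op V -> op N -> subset N (closure op V) -> subset N V.
Proof. intros rV oN HN x Nx. apply rV. exists N. auto. Qed.

Lemma punctured_open (p : X) : hausdorff op -> op (fun x => x <> p).
Proof.
  intros Hhaus. apply open_of_locally_open. intros x Hx.
  destruct (Hhaus x p Hx) as [U [V [oU [oV [Ux [Vp HUV]]]]]].
  exists U. repeat split; auto.
  intros y Uy ->. eauto.
Qed.

End GeneralTopology.

Section DisjointOpenCover.
Variables (X : Type) (op : (X -> Prop) -> Prop).
Hypotheses (Htop : is_topology op) (Hsemireg : semiregular op)
  (Hpc : pseudocompact op).
Variables (J : Type) (N : J -> X -> Prop) (p : X).
Hypothesis HNopen : forall t, op (N t).
Hypothesis HNdisjoint : forall t t' x, N t x -> N t' x -> t = t'.
Hypothesis HNcover : forall x, x <> p -> exists t, N t x.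

(** For an open [V] around [p], the traces of the sets [N t] on the
    exterior of [V] form a locally finite family: [V] misses all of them and
    [N t0] meets only the trace of [N t0]. *)
Lemma traces_locally_finite (V : X -> Prop) (P : J -> Prop) :
  op V -> V p ->
  locally_finite op (fun Y => exists t, P t /\
                       Y = fun x => N t x /\ ~ closure op V x).
Proof.
  intros oV Vp x.
  destruct (classic (x = p)) as [->|Hx].
  - exists V. repeat split; auto. exists nil.
    intros Y [[t [_ ->]] [y [Vy [_ Cy]]]].
    exfalso. exact (Cy (@subset_closure X op V y Vy)).
  - destruct (HNcover x Hx) as [t0 Nx].
    exists (N t0). repeat split; auto.
    exists ((fun x => N t0 x /\ ~ closure op V x) :: nil).
    intros Y [[t [_ ->]] [y [Ny [Ny' _]]]].
    left. rewrite (HNdisjoint t0 t y Ny Ny'). reflexivity.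
Qed.

Theorem finitely_many_cells_escape (U : X -> Prop) :
  op U -> U p -> finite_set (fun t => ~ subset (N t) U).
Proof.
  intros oU Up.
  destruct (Hsemireg U p oU Up) as [V [rV [Vp VU]]].
  pose proof (regular_open_open _ _ Htop _ rV) as oV.
  set (W := fun t x => N t x /\ ~ closure op V x).
  (* a set [N t] leaving [U] leaves [V], hence is not inside [cl V] *)
  assert (Hmeet : forall t, ~ subset (N t) U -> exists x, W t x).
  { intros t Hesc. apply NNPP. intros Hno. apply Hesc.
    intros x Nx. apply VU.
    apply (open_subset_closure_regular _ _ _ _ rV (HNopen t)); auto.
    intros y Ny. apply NNPP. intros Cy. apply Hno. exists y. split; auto. }
  apply (finite_of_finite_image W).
  - intros t t' Ht _ E. destruct (Hmeet t Ht) as [x [Nx Cx]].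
    assert (Wx : W t' x) by (rewrite <- E; split; auto).
    exact (HNdisjoint t t' x Nx (proj1 Wx)).
  - apply Hpc.
    + intros Y [t [Ht ->]]. split; [|exact (Hmeet t Ht)].
      apply Htop; [apply HNopen | apply (exterior_open _ _ Htop)].
    + exact (traces_locally_finite _ _ oV Vp).
Qed.

End DisjointOpenCover.

Section Cells.
Variables (I : Type) (T : I -> MonZ) (L : I -> Type).
Local Notation S := (OS T L).
Local Notation mul := (@osmul I T L).
Local Notation index := ({ i : I & (L i * L i)%type }).

Definition cell (t : index) : S -> Prop :=
  fun y => exists s : nz T (projT1 t),
    y = Some (existT _ (projT1 t) (fst (projT2 t), s, snd (projT2 t))).

Lemma block_cell (t : index) (y : S) :
  @block I T L (projT1 t) (fst (projT2 t)) (snd (projT2 t)) y -> y = None \/ cell t y.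
Proof. exact (fun H => H). Qed.

Lemma cell_cover (y : S) : y <> None -> exists t, cell t y.
Proof.
  destruct y as [[i [[a s] b]]|]; [|contradiction].
  intros _. exists (existT _ i (a, b)). exists s. reflexivity.
Qed.

Lemma cell_disjoint (t t' : index) (y : S) : cell t y -> cell t' y -> t = t'.
Proof.
  intros [s Hs] [s' Hs']. rewrite Hs in Hs'.
  apply (f_equal (fun o : S => match o with
    | Some e => existT (fun i => (L i * L i)%type) (projT1 e)
                  (fst (fst (projT2 e)), snd (projT2 e))
    | None => t end)) in Hs'.
  destruct t as [i [a b]], t' as [i' [a' b']]. exact Hs'.
Qed.

Lemma osmul_zero_r (x : S) : mul x None = None.
Proof. destruct x as [[i u]|]; reflexivity. Qed.

Lemma osmul_other_component (i j : I) u v :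
  j <> i -> mul (Some (existT _ i u)) (Some (existT _ j v)) = None.
Proof.
  intros Hji. unfold osmul.
  destruct (excluded_middle_informative (j = i)); [contradiction | reflexivity].
Qed.

Lemma osmul_same_component (i : I) (u v : L i * nz T i * L i) :
  mul (Some (existT _ i u)) (Some (existT _ i v)) = @bmul I T L i u v.
Proof.
  unfold osmul.
  destruct (excluded_middle_informative (i = i)) as [e|n]; [|contradiction].
  rewrite (proof_irrelevance _ e eq_refl). reflexivity.
Qed.

Lemma bmul_matching (i : I) (a b d : L i) (s t : nz T i)
  (h : mz_mul (T i) (proj1_sig s) (proj1_sig t) <> mz_zero (T i)) :
  @bmul I T L i (a, s, b) (b, t, d) =
  Some (existT _ i (a, exist (fun z => z <> mz_zero (T i)) _ h, d)).
Proof.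
  unfold bmul.
  destruct (excluded_middle_informative (b = b)) as [_|n]; [|contradiction].
  destruct (excluded_middle_informative _) as [z|h']; [contradiction|].
  rewrite (proof_irrelevance _ h' h). reflexivity.
Qed.

Lemma bmul_nonzero (i : I) (a b c d : L i) (s t : nz T i) :
  @bmul I T L i (a, s, b) (c, t, d) <> None ->
  b = c /\ exists r, @bmul I T L i (a, s, b) (c, t, d) = Some (existT _ i (a, r, d)).
Proof.
  unfold bmul.
  destruct (excluded_middle_informative (b = c)) as [e|n]; [|contradiction].
  destruct (excluded_middle_informative _) as [z|h]; [contradiction|].
  intros _. eauto.
Qed.

Hypothesis Hunit : forall i (x : T i),
  mz_mul (T i) (mz_one (T i)) x = x /\ mz_mul (T i) x (mz_one (T i)) = x.
Hypothesis Hzero : forall i (x : T i),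
  mz_mul (T i) (mz_zero (T i)) x = mz_zero (T i) /\
  mz_mul (T i) x (mz_zero (T i)) = mz_zero (T i).

Lemma nz_empty_of_trivial (i : I) :
  mz_one (T i) = mz_zero (T i) -> nz T i -> False.
Proof.
  intros E [s hs]. apply hs.
  rewrite <- (proj2 (Hunit i s)), E. apply Hzero.
Qed.

Definition nz_one (i : I) (h1 : mz_one (T i) <> mz_zero (T i)) : nz T i :=
  exist _ (mz_one (T i)) h1.

Definition unit_at (i : I) (h1 : mz_one (T i) <> mz_zero (T i)) (a : L i) : S :=
  Some (existT _ i (a, nz_one i h1, a)).

Lemma unit_at_right (i : I) h1 (a b : L i) (s : nz T i) :
  mul (Some (existT _ i (a, s, b))) (unit_at i h1 b) = Some (existT _ i (a, s, b)).
Proof.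
  assert (h : mz_mul (T i) (proj1_sig s) (mz_one (T i)) <> mz_zero (T i)).
  { rewrite (proj2 (Hunit _ _)). apply proj2_sig. }
  unfold unit_at. rewrite osmul_same_component,
    (bmul_matching i a b b s (nz_one i h1) h).
  destruct s as [s hs]. do 4 f_equal.
  apply ProofIrrelevanceTheory.subset_eq_compat, Hunit.
Qed.

Lemma unit_at_left (i : I) h1 (a b : L i) (s : nz T i) :
  mul (unit_at i h1 a) (Some (existT _ i (a, s, b))) = Some (existT _ i (a, s, b)).
Proof.
  assert (h : mz_mul (T i) (mz_one (T i)) (proj1_sig s) <> mz_zero (T i)).
  { rewrite (proj1 (Hunit _ _)). apply proj2_sig. }
  unfold unit_at. rewrite osmul_same_component,
    (bmul_matching i a a b (nz_one i h1) s h).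
  destruct s as [s hs]. do 4 f_equal.
  apply ProofIrrelevanceTheory.subset_eq_compat, Hunit.
Qed.

Lemma cell_iff_sandwich (i : I) h1 (a b : L i) (y : S) :
  cell (existT _ i (a, b)) y <-> mul (unit_at i h1 a) (mul y (unit_at i h1 b)) <> None.
Proof.
  split.
  - intros [s ->]. cbn [projT1 projT2 fst snd]. rewrite unit_at_right, unit_at_left. discriminate.
  - destruct y as [[j [[c s] d]]|]; [|rewrite osmul_zero_r; contradiction].
    intros Hne.
    destruct (classic (i = j)) as [<-|Hij];
      [|unfold unit_at at 2 in Hne;
        rewrite osmul_other_component, osmul_zero_r in Hne; [contradiction | auto]].
    unfold unit_at at 2 in Hne. rewrite osmul_same_component in Hne.
    assert (Hinner : @bmul I T L i (c, s, d)
                       (b, nz_one i h1, b) <> None).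
    { intros E. rewrite E, osmul_zero_r in Hne. contradiction. }
    destruct (bmul_nonzero _ _ _ _ _ _ _ Hinner) as [-> [r Hr]].
    rewrite Hr in Hne. unfold unit_at in Hne. rewrite osmul_same_component in Hne.
    destruct (bmul_nonzero _ _ _ _ _ _ _ Hne) as [-> _].
    exists s. reflexivity.
Qed.

Lemma cell_open (op : (S -> Prop) -> Prop) :
  semitopological_semigroup op mul -> forall t, op (cell t).
Proof.
  intros [Htop [Hhaus [_ [Hleft Hright]]]] [i [a b]].
  destruct (classic (mz_one (T i) = mz_zero (T i))) as [E|h1].
  - apply (op_ext _ (fun _ => False)); [|apply Htop].
    intro y; split; [tauto|]. intros [s _]. exact (nz_empty_of_trivial _ E s).
  - apply (op_ext _ (fun y => mul (unit_at i h1 a) (mul y (unit_at i h1 b)) <> None)).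
    + intro y. symmetry. apply cell_iff_sandwich.
    + apply (Hright (unit_at i h1 b) (fun z => mul (unit_at i h1 a) z <> None)).
      apply (Hleft (unit_at i h1 a) (fun z => z <> None)).
      exact (punctured_open _ _ Htop None Hhaus).
Qed.

End Cells.

Theorem proposition2p8
  (I : Type) (T : I -> MonZ) (L : I -> Type)
  (op : (OS T L -> Prop) -> Prop)
  (HT : forall i, semitopological_monoid_with_zero (T i))
  (HS : semitopological_semigroup op (@osmul I T L))
  (Hsemireg : semiregular op)
  (Hpc : pseudocompact op)
  (HB : forall i, topological_Brandt_component op i) :
  forall U : OS T L -> Prop, op U -> U (zeroOS T L) ->
    finite_set (fun t : { i : I & (L i * L i)%type } =>
      ~ subset (@block I T L (projT1 t) (fst (projT2 t)) (snd (projT2 t))) U).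
Proof.
  intros U oU U0.
  assert (Hunit : forall i (x : T i),
    mz_mul (T i) (mz_one (T i)) x = x /\ mz_mul (T i) x (mz_one (T i)) = x)
    by (intro i; apply (HT i)).
  assert (Hzero : forall i (x : T i),
    mz_mul (T i) (mz_zero (T i)) x = mz_zero (T i) /\
    mz_mul (T i) x (mz_zero (T i)) = mz_zero (T i))
    by (intro i; apply (HT i)).
  (* a block escaping [U] has its cell escaping [U], since [U] contains 0 *)
  apply (finite_set_mono _ (fun t => ~ subset (cell I T L t) U)).
  { intros t Hesc Hcell. apply Hesc. intros y Hy.
    destruct (block_cell _ _ _ _ _ Hy) as [->|Cy]; auto. }
  apply (finitely_many_cells_escape _ _ (proj1 HS) Hsemireg Hpc _ (cell I T L) None); auto.
  - exact (cell_open _ _ _ Hunit Hzero _ HS).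
  - exact (@cell_disjoint I T L).
  - exact (@cell_cover I T L).
Qed.
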